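(* Let $p\in[0,1]$ be unknown, and let $\theta\in[0,1)$, $\eta\in(0,1)$ with $\theta+\eta<1$, and $\delta\in(0,1]$. Suppose \textsc{Tester} is a procedure satisfying the tester guarantee described in the context. Then the algorithm \textsc{BinCert}$(\theta,\eta,\delta)$ (defined in the context) terminates, and $$\Pr[\textsc{BinCert}(\theta,\eta,\delta)\text{ returns Yes}]\ge 1-\delta \quad\text{whenever } p\le\theta,$$ $$\Pr[\textsc{BinCert}(\theta,\eta,\delta)\text{ returns No}]\ge 1-\delta \quad\text{whenever } p>\theta+\eta.$$
   Context: Setting: there is an unknown number $p\in[0,1]$ (the probability that a 0-1 property holds on a random input). A procedure $\textsc{Tester}(a,b,\delta')$, for $0\le a<b\le 1$ and $\delta'\in(0,1]$, is a randomized procedure returning one of Yes, No, None, using fresh randomness independent of all other calls, and satisfying the tester guarantee: if $p\le a$ then $\Pr[\textsc{Tester}(a,b,\delta')\text{ returns Yes}]\ge 1-\delta'$, and if $p> b$ then $\Pr[\textsc{Tester}(a,b,\delta')\text{ returns No}]\ge 1-\delta'$. Algorithm $\textsc{BinCert}(\theta,\eta,\delta)$: Let $\log$ denote $\log_2$ and set $n=3+\max(0,\log(\theta/\eta))+\max(0,\log((1-\theta-\eta)/\eta))$ (where $\max(0,\log(\theta/\eta))$ is taken to be $0$ if $\theta=0$), and $\delta_{\min}=\delta/n$. The algorithm maintains a ''left'' interval $(a_L,b_L)$ and a ''right'' interval $(a_R,b_R)$, both initially undefined. The left update is: if $\theta=0$, set $(a_L,b_L)=(0,\eta)$; otherwise,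 if the left interval is undefined, set it to $(0,\theta)$; otherwise with $\alpha=b_L-a_L$ set it to $(b_L-\max(\eta,\alpha/2),\,b_L)$. The right update is: if the right interval is undefined, set it to $(\theta+\eta,1)$; otherwise with $\alpha=b_R-a_R$ set it to $(a_R,\,a_R+\max(\eta,\alpha/2))$. The algorithm repeats the following loop: (1) perform the left update; if $b_L-a_L>\eta$, call $\textsc{Tester}(a_L,b_L,\delta_{\min})$ and if it returns Yes, return Yes. (2) Perform the right update; if $b_R-a_R>\eta$, call $\textsc{Tester}(a_R,b_R,\delta_{\min})$ and if it returns No, return No. (3) If $b_R-a_R\le\eta$ and $b_L-a_L\le\eta$, return the output of $\textsc{Tester}(\theta,\theta+\eta,\delta_{\min})$. *)

From Stdlib Require Import Reals Lra.
Open Scope R_scope.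

Inductive outcome := Yes | No | NoneOut.

(** A (randomized) tester, for a fixed unknown p, is described by its output
    distribution: [T a b d o] = Pr[Tester(a,b,d) returns o]. Each call uses
    fresh independent randomness, so the output distribution of BinCert is
    obtained by the usual sequential composition of these distributions. *)
Definition tester := R -> R -> R -> outcome -> R.

Definition is_dist (f : outcome -> R) : Prop :=
  (forall o, 0 <= f o) /\ f Yes + f No + f NoneOut = 1.

Definition tester_guarantee (p : R) (T : tester) : Prop :=
  forall a b d, 0 <= a -> a < b -> b <= 1 -> 0 < d -> d <= 1 ->
    is_dist (T a b d) /\
    (p <= a -> T a b d Yes >= 1 - d) /\
    (p > b -> T a b d No >= 1 - d).

Definition log2 (x : R) : R := ln x / ln 2.

Definition bincert_n (theta eta : R) : R :=
  3 + (if Req_EM_T theta 0 then 0 else Rmax 0 (log2 (theta / eta)))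
    + Rmax 0 (log2 ((1 - theta - eta) / eta)).

Definition left_update (theta eta : R) (L : option (R * R)) : R * R :=
  if Req_EM_T theta 0 then (0, eta)
  else match L with
       | None => (0, theta)
       | Some (a, b) => (b - Rmax eta ((b - a) / 2), b)
       end.

Definition right_update (theta eta : R) (Rt : option (R * R)) : R * R :=
  match Rt with
  | None => (theta + eta, 1)
  | Some (a, b) => (a, a + Rmax eta ((b - a) / 2))
  end.

Definition ind_yes (o : outcome) : R := match o with Yes => 1 | _ => 0 end.
Definition ind_no (o : outcome) : R := match o with No => 1 | _ => 0 end.

(** [bincert_run T theta eta dmin fuel L Rt] runs at most [fuel] iterations of
    the loop of BinCert from the interval state (L, Rt).  It returns [None] if
    the loop has not terminated within [fuel] iterations (along any branch:
    the interval sequence is deterministic), and otherwise [Some d] where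
    [d o] is the probability that BinCert returns [o]. *)
Fixpoint bincert_run (T : tester) (theta eta dmin : R) (fuel : nat)
    (L Rt : option (R * R)) : option (outcome -> R) :=
  match fuel with
  | O => None
  | S k =>
    let '(aL, bL) := left_update theta eta L in
    (* step (1): probability of returning Yes here *)
    let pY := if Rlt_dec eta (bL - aL) then T aL bL dmin Yes else 0 in
    let '(aR, bR) := right_update theta eta Rt in
    (* step (2): probability of returning No here (given not returned before) *)
    let qN := if Rlt_dec eta (bR - aR) then T aR bR dmin No else 0 in
    let cont :=
      if Rle_dec (bR - aR) eta then
        if Rle_dec (bL - aL) eta then Some (T theta (theta + eta) dmin)
        else bincert_run T theta eta dmin k (Some (aL, bL)) (Some (aR, bR))
      else bincert_run T theta eta dmin k (Some (aL, bL)) (Some (aR, bR)) in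
    match cont with
    | None => None
    | Some d => Some (fun o => ind_yes o * pY
                        + (1 - pY) * (ind_no o * qN + (1 - qN) * d o))
    end
  end.

Definition bincert (T : tester) (theta eta delta : R) (fuel : nat)
  : option (outcome -> R) :=
  bincert_run T theta eta (delta / bincert_n theta eta) fuel None None.

(* Each test of the left interval halves its width (down to eta), and likewise
   on the right, so the left side performs at most 1 + log(theta/eta) tests, the
   right side at most 1 + log((1 - theta - eta)/eta), and then the loop ends.
   The left interval always has right end theta and the right interval left end
   theta + eta.  Hence if p <= theta, every left test can only help, and each
   right test as well as the final test errs with probability at most delta/n;
   symmetrically if p > theta + eta.  A union bound over the at most n tests
   that can err gives the claim. *)
From Stdlib Require Import Reals Lra Lia Psatz ZArith.
Open Scope R_scope.

Lemma exists_pow2_ge (x : R) :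
  0 < x -> exists c : nat, x <= 2 ^ c /\ INR c <= 1 + Rmax 0 (log2 x).
Proof.
  intros Hx. pose proof (Rmax_l 0 (log2 x)).
  destruct (Rle_dec x 1) as [Hx1|Hx1].
  { exists 0%nat. simpl. lra. }
  assert (Hln2 : 0 < ln 2) by (pose proof ln_lt_2; lra).
  assert (Hlnx : 0 < ln x) by (rewrite <- ln_1; apply ln_increasing; lra).
  assert (Hlog : 0 < log2 x) by (apply Rdiv_lt_0_compat; lra).
  destruct (archimed (log2 x)) as [Hup1 Hup2].
  assert (Hup0 : (0 < up (log2 x))%Z) by (apply lt_0_IZR; lra).
  exists (Z.to_nat (up (log2 x))).
  assert (HINR : INR (Z.to_nat (up (log2 x))) = IZR (up (log2 x))).
  { rewrite INR_IZR_INZ, Z2Nat.id; [reflexivity | lia]. }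
  rewrite Rmax_right, HINR by lra. split; [|lra].
  rewrite <- Rpower_pow, HINR by lra. unfold Rpower.
  rewrite <- (exp_ln x) at 1 by lra. left. apply exp_increasing.
  replace (ln x) with (log2 x * ln 2) by (unfold log2; field; lra).
  nra.
Qed.

Lemma Rmult_div_le (x n d : R) : 0 <= d -> 0 < n -> x <= n -> x * (d / n) <= d.
Proof.
  intros Hd Hn Hx. apply Rle_trans with (n * (d / n)).
  - apply Rmult_le_compat_r; [unfold Rdiv; apply Rmult_le_pos; [|left; apply Rinv_0_lt_compat]|]; lra.
  - right. field. lra.
Qed.

Lemma tester_call_bounds (p : R) (T : tester) (a b d : R) :
  tester_guarantee p T -> 0 <= a -> a < b -> b <= 1 -> 0 < d <= 1 ->
  (forall o, 0 <= T a b d o <= 1) /\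
  (p <= a -> T a b d No <= d) /\ (p > b -> T a b d Yes <= d).
Proof.
  intros HT Ha Hab Hb Hd.
  destruct (HT a b d) as [[Hnn Hsum] [Hyes Hno]]; try lra.
  pose proof (Hnn Yes). pose proof (Hnn No). pose proof (Hnn NoneOut).
  split; [intros []; lra|].
  split; intros Hpa; [specialize (Hyes Hpa) | specialize (Hno Hpa)]; lra.
Qed.

Definition width (u : R * R) : R := snd u - fst u.

Lemma Rmax_half_le_pow (eta w : R) (c : nat) :
  0 < eta -> w <= eta * 2 ^ S c -> Rmax eta (w / 2) <= eta * 2 ^ c.
Proof.
  intros Heta Hw. simpl in Hw. assert (1 <= 2 ^ c) by (apply pow_R1_Rle; lra).
  unfold Rmax; destruct Rle_dec; nra.
Qed.

Section BinCert.

Variables (p theta eta dmin : R) (T : tester).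
Hypotheses (Htheta : 0 <= theta) (Heta : 0 < eta) (Hte : theta + eta <= 1)
  (Hdmin : 0 < dmin <= 1) (HT : tester_guarantee p T).

Definition wide (u : R * R) : nat := if Rlt_dec eta (width u) then 1%nat else 0%nat.

Lemma budget_next (u : R * R) (c : nat) :
  width u <= eta * 2 ^ c ->
  exists c', Rmax eta (width u / 2) <= eta * 2 ^ c' /\ (c' + wide u <= c)%nat.
Proof.
  intros Hw. unfold wide. destruct (Rlt_dec eta (width u)) as [Hwide|Hnarrow].
  - destruct c as [|c]; [simpl in Hw; lra|].
    exists c. split; [apply Rmax_half_le_pow|]; lia || lra.
  - exists c. split; [|lia].
    assert (1 <= 2 ^ c) by (apply pow_R1_Rle; lra).
    unfold Rmax; destruct Rle_dec; nra.
Qed.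

Definition left_inv (u : R * R) : Prop :=
  (theta <> 0 -> snd u = theta) /\ (eta < width u -> 0 <= fst u /\ snd u = theta).

Definition right_inv (u : R * R) : Prop :=
  fst u = theta + eta /\ (eta < width u -> snd u <= 1).

Lemma left_update_None_inv : left_inv (left_update theta eta None).
Proof.
  unfold left_inv, left_update, width.
  destruct (Req_EM_T theta 0); simpl; split; intros; lra.
Qed.

Lemma right_update_None_inv : right_inv (right_update theta eta None).
Proof. unfold right_inv, width; simpl; split; intros; lra. Qed.

Lemma left_update_Some_inv (u : R * R) :
  left_inv u -> left_inv (left_update theta eta (Some u)) /\
  width (left_update theta eta (Some u)) <= Rmax eta (width u / 2).
Proof.
  destruct u as [a b]. intros [Hb Hwide].
  unfold left_inv, left_update, width in *; simpl in *.
  destruct (Req_EM_T theta 0) as [E|E]; simpl.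
  - split; [split; intros; lra|]. rewrite Rminus_0_r. apply Rmax_l.
  - specialize (Hb E). unfold Rmax in *; destruct Rle_dec; simpl.
    + split; [split; intros|]; lra.
    + split; [split; intros|]; lra.
Qed.

Lemma right_update_Some_inv (u : R * R) :
  right_inv u -> right_inv (right_update theta eta (Some u)) /\
  width (right_update theta eta (Some u)) <= Rmax eta (width u / 2).
Proof.
  destruct u as [a b]. intros [Ha Hwide].
  unfold right_inv, right_update, width in *; simpl in *.
  unfold Rmax in *; destruct Rle_dec; simpl.
  - split; [split; intros; [|assert (b <= 1) by (apply Hwide; lra)]|]; lra.
  - split; [split; intros|]; lra.
Qed.

Definition test_prob (u : R * R) (o : outcome) : R :=
  if Rlt_dec eta (width u) then T (fst u) (snd u) dmin o else 0.

Lemma left_test_prob_bounds (u : R * R) :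
  left_inv u ->
  0 <= test_prob u Yes <= 1 /\ (p > theta -> test_prob u Yes <= INR (wide u) * dmin).
Proof.
  intros [_ Hwide]. unfold test_prob, wide.
  destruct (Rlt_dec eta (width u)) as [Hw|Hw]; simpl; [|lra].
  destruct (Hwide Hw) as [Ha Hb]. unfold width in Hw.
  destruct (tester_call_bounds p T (fst u) (snd u) dmin) as [Hprob [_ Herr]];
    try assumption; try lra.
  split; [apply Hprob|]. intros Hp. rewrite Rmult_1_l. apply Herr. lra.
Qed.

Lemma right_test_prob_bounds (u : R * R) :
  right_inv u ->
  0 <= test_prob u No <= 1 /\ (p <= theta -> test_prob u No <= INR (wide u) * dmin).
Proof.
  intros [Ha Hwide]. unfold test_prob, wide.
  destruct (Rlt_dec eta (width u)) as [Hw|Hw]; simpl; [|lra].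
  specialize (Hwide Hw). unfold width in Hw.
  destruct (tester_call_bounds p T (fst u) (snd u) dmin) as [Hprob [Herr _]];
    try assumption; try lra.
  split; [apply Hprob|]. intros Hp. rewrite Rmult_1_l. apply Herr. lra.
Qed.

Definition certifies (d : outcome -> R) (errY errN : R) : Prop :=
  (p <= theta -> d Yes >= 1 - errY) /\ (p > theta + eta -> d No >= 1 - errN).

Lemma certifies_weaken (d : outcome -> R) (errY errN errY' errN' : R) :
  errY <= errY' -> errN <= errN' -> certifies d errY errN -> certifies d errY' errN'.
Proof. intros HY HN [CY CN]; split; intros Hp; [specialize (CY Hp) | specialize (CN Hp)]; lra. Qed.

Lemma final_test_certifies : certifies (T theta (theta + eta) dmin) dmin dmin.
Proof.
  destruct (HT theta (theta + eta) dmin) as [_ [Hyes Hno]]; try lra.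
  split; assumption.
Qed.

Definition mix (pY qN : R) (d : outcome -> R) (o : outcome) : R :=
  ind_yes o * pY + (1 - pY) * (ind_no o * qN + (1 - qN) * d o).

Lemma mix_certifies (pY qN : R) (d : outcome -> R) (errY errN eY eN : R) :
  0 <= pY <= 1 -> 0 <= qN <= 1 -> 0 <= errY -> 0 <= errN ->
  (p <= theta -> qN <= eY) -> (p > theta + eta -> pY <= eN) ->
  certifies d errY errN -> certifies (mix pY qN d) (eY + errY) (eN + errN).
Proof.
  intros HpY HqN HerrY HerrN HY HN [CY CN]. unfold certifies, mix; cbn [ind_yes ind_no].
  split; intros Hp.
  - specialize (CY Hp). specialize (HY Hp).
    assert ((1 - qN) * d Yes >= 1 - errY - qN) by nra. nra.
  - specialize (CN Hp). specialize (HN Hp).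
    assert (qN + (1 - qN) * d No >= 1 - errN) by nra. nra.
Qed.

(* [cL] and [cR] bound the number of tests the left resp. right side still
   performs; each such test and the final one err with probability <= dmin. *)
Lemma bincert_run_certifies (k : nat) (L Rt : option (R * R)) (cL cR : nat) :
  left_inv (left_update theta eta L) -> right_inv (right_update theta eta Rt) ->
  width (left_update theta eta L) <= eta * 2 ^ cL ->
  width (right_update theta eta Rt) <= eta * 2 ^ cR ->
  (cL + cR < k)%nat ->
  exists d, bincert_run T theta eta dmin k L Rt = Some d /\
    certifies d ((INR cR + 1) * dmin) ((INR cL + 1) * dmin).
Proof.
  revert L Rt cL cR.
  induction k as [|k IH]; intros L Rt cL cR HL HR HwL HwR Hk; [lia|].
  cbn [bincert_run].
  destruct (left_update theta eta L) as [aL bL] eqn:EL.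
  destruct (right_update theta eta Rt) as [aR bR] eqn:ER.
  change (if Rlt_dec eta (bL - aL) then T aL bL dmin Yes else 0)
    with (test_prob (aL, bL) Yes).
  change (if Rlt_dec eta (bR - aR) then T aR bR dmin No else 0)
    with (test_prob (aR, bR) No).
  destruct (left_test_prob_bounds _ HL) as [HpY HpYerr].
  destruct (right_test_prob_bounds _ HR) as [HqN HqNerr].
  destruct (budget_next _ _ HwL) as [cL' [HwL' HcL]].
  destruct (budget_next _ _ HwR) as [cR' [HwR' HcR]].
  set (cont := if Rle_dec (bR - aR) eta then _ else _).
  assert (Hcont : exists d, cont = Some d /\
            certifies d ((INR cR' + 1) * dmin) ((INR cL' + 1) * dmin)).
  { assert (Hrec : ~ (bR - aR <= eta /\ bL - aL <= eta) -> exists d,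
              bincert_run T theta eta dmin k (Some (aL, bL)) (Some (aR, bR)) = Some d /\
              certifies d ((INR cR' + 1) * dmin) ((INR cL' + 1) * dmin)).
    { intros Hwide.
      destruct (left_update_Some_inv _ HL) as [HL' HwL''].
      destruct (right_update_Some_inv _ HR) as [HR' HwR''].
      apply IH; try assumption; try lra.
      unfold wide, width in HcL, HcR; simpl in HcL, HcR.
      destruct (Rlt_dec eta (bL - aL)); destruct (Rlt_dec eta (bR - aR)); lia || lra. }
    unfold cont.
    destruct (Rle_dec (bR - aR) eta); [destruct (Rle_dec (bL - aL) eta)|];
      try (apply Hrec; tauto).
    eexists; split; [reflexivity|].
    eapply certifies_weaken; [| | apply final_test_certifies];
      pose proof (pos_INR cR'); pose proof (pos_INR cL'); nra. }
  destruct Hcont as [d [-> Hd]].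
  exists (mix (test_prob (aL, bL) Yes) (test_prob (aR, bR) No) d).
  split; [reflexivity|].
  assert (HcL_R : INR cL' + INR (wide (aL, bL)) <= INR cL)
    by (rewrite <- plus_INR; apply le_INR; exact HcL).
  assert (HcR_R : INR cR' + INR (wide (aR, bR)) <= INR cR)
    by (rewrite <- plus_INR; apply le_INR; exact HcR).
  pose proof (pos_INR cL'); pose proof (pos_INR cR').
  apply (certifies_weaken _ (INR (wide (aR, bR)) * dmin + (INR cR' + 1) * dmin)
                            (INR (wide (aL, bL)) * dmin + (INR cL' + 1) * dmin));
    [nra | nra |].
  apply mix_certifies; try assumption; try (apply Rmult_le_pos; lra).
  intros Hp. apply HpYerr. lra.
Qed.

End BinCert.

Lemma left_update_None_budget (theta eta : R) :
  0 <= theta -> 0 < eta ->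
  exists c : nat, width (left_update theta eta None) <= eta * 2 ^ c /\
    INR c <= 1 + (if Req_EM_T theta 0 then 0 else Rmax 0 (log2 (theta / eta))).
Proof.
  intros Htheta Heta. unfold left_update, width.
  destruct (Req_EM_T theta 0) as [E|E]; simpl.
  - exists 0%nat. simpl. lra.
  - destruct (exists_pow2_ge (theta / eta)) as [c [Hc Hlog]];
      [apply Rdiv_lt_0_compat; lra|].
    exists c. split; [|lra].
    apply (Rmult_le_compat_l eta) in Hc; [|lra].
    replace (eta * (theta / eta)) with theta in Hc by (field; lra). lra.
Qed.

Lemma right_update_None_budget (theta eta : R) :
  0 < eta -> theta + eta < 1 ->
  exists c : nat, width (right_update theta eta None) <= eta * 2 ^ c /\
    INR c <= 1 + Rmax 0 (log2 ((1 - theta - eta) / eta)).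
Proof.
  intros Heta Hte. unfold right_update, width; simpl.
  destruct (exists_pow2_ge ((1 - theta - eta) / eta)) as [c [Hc Hlog]];
    [apply Rdiv_lt_0_compat; lra|].
  exists c. split; [|lra].
  apply (Rmult_le_compat_l eta) in Hc; [|lra].
  replace (eta * ((1 - theta - eta) / eta)) with (1 - theta - eta) in Hc by (field; lra).
  lra.
Qed.

Lemma initial_budgets (theta eta : R) :
  0 <= theta -> 0 < eta -> theta + eta < 1 ->
  exists cL cR : nat,
    width (left_update theta eta None) <= eta * 2 ^ cL /\
    width (right_update theta eta None) <= eta * 2 ^ cR /\
    INR cL + 1 <= bincert_n theta eta /\ INR cR + 1 <= bincert_n theta eta.
Proof.
  intros Htheta Heta Hte.
  destruct (left_update_None_budget theta eta) as [cL [HwL HcL]]; try lra.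
  destruct (right_update_None_budget theta eta) as [cR [HwR HcR]]; try lra.
  exists cL, cR. do 2 (split; [assumption|]).
  unfold bincert_n. revert HcL.
  pose proof (Rmax_l 0 (log2 ((1 - theta - eta) / eta))).
  pose proof (Rmax_l 0 (log2 (theta / eta))).
  destruct (Req_EM_T theta 0); intros; lra.
Qed.

Theorem theorem1 (p theta eta delta : R) (T : tester)
  (Hp : 0 <= p <= 1) (Htheta : 0 <= theta < 1) (Heta : 0 < eta < 1)
  (Hte : theta + eta < 1) (Hdelta : 0 < delta <= 1)
  (HT : tester_guarantee p T) :
  exists (N : nat) (d : outcome -> R),
    bincert T theta eta delta N = Some d /\
    (p <= theta -> d Yes >= 1 - delta) /\
    (p > theta + eta -> d No >= 1 - delta).
Proof.
  destruct (initial_budgets theta eta) as [cL [cR [HwL [HwR [HnL HnR]]]]]; try lra.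
  set (n := bincert_n theta eta) in *.
  pose proof (pos_INR cL); pose proof (pos_INR cR).
  assert (Hdmin : 0 < delta / n <= 1).
  { split; [apply Rdiv_lt_0_compat; lra|].
    pose proof (Rmult_div_le (INR cL + 1) n delta). nra. }
  assert (Hrun : exists d, bincert_run T theta eta (delta / n) (S (cL + cR)) None None = Some d
                 /\ certifies p theta eta d ((INR cR + 1) * (delta / n))
                                           ((INR cL + 1) * (delta / n))).
  { apply bincert_run_certifies; try assumption; try lra; try lia.
    - apply left_update_None_inv; lra.
    - apply right_update_None_inv. }
  destruct Hrun as [d [Hrun Hcert]].
  exists (S (cL + cR)), d. split; [exact Hrun|].
  apply (certifies_weaken p theta eta d _ _ _ _
           (Rmult_div_le (INR cR + 1) n delta ltac:(lra) ltac:(lra) HnR)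
           (Rmult_div_le (INR cL + 1) n delta ltac:(lra) ltac:(lra) HnL) Hcert).
Qed.
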